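(* Let $V$ be a finite nonempty set, $c\in\mathbb{R}^{P_V}$, $U\subseteq V$, and $\hat x$ a maximally specific partial function on $P_V$ with $\hat x^{-1}(1)\cap (U\times(V\setminus U))=\emptyset$. If $c_{ij}\le 0$ for all $ij\in (U\times(V\setminus U))\setminus\hat x^{-1}(0)$, then there is a maximizer $x^*$ of $\varphi_c$ over $X_V[\hat x]$ such that $x^*_{ij}=0$ for all $ij\in (U\times(V\setminus U))\setminus\hat x^{-1}(0)$.
   Context: $P_V=\{pq\in V^2\mid p\neq q\}$; $X_V$ is the set of $x\in\{0,1\}^{P_V}$ with $x_{pq}+x_{qr}-x_{pr}\le 1$ for all pairwise distinct $p,q,r\in V$; $\varphi_c(x)=\sum_{pq\in P_V}c_{pq}x_{pq}$. A partial function $\tilde x$ is a map from $\operatorname{dom}(\tilde x)\subseteq P_V$ to $\{0,1\}$, $\tilde x^{-1}(b)$ the pairs mapped to $b$, and $X_V[\tilde x]=\{x\in X_V\mid x_{pq}=\tilde x_{pq}\ \forall pq\in\operatorname{dom}(\tilde x)\}$. A pair $pq$ is decided if $x_{pq}=x'_{pq}$ for all $x,x'\in X_V[\tilde x]$; $\tilde x$ is maximally specific if $X_V[\tilde x]\ne\emptyset$ and the decided pairs are exactly $\operatorname{dom}(\tilde x)$. *)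

From HB Require Import structures.
From mathcomp Require Import all_boot all_order all_algebra.
From mathcomp Require Import reals.
Set Implicit Arguments. Unset Strict Implicit. Unset Printing Implicit Defensive.
Import Order.TTheory GRing.Theory Num.Theory.

Definition PV (V : finType) := {pq : V * V | pq.1 != pq.2}.

(* value of x at (p,q), 0 when p = q (never used for distinct p,q) *)
Definition xat (V : finType) (x : {ffun PV V -> bool}) (p q : V) : nat :=
  match @insub _ (fun pq : V * V => pq.1 != pq.2) (PV V) (p, q) with
  | Some pq => x pq
  | None => 0%N
  end.

Definition in_XV (V : finType) (x : {ffun PV V -> bool}) : Prop :=
  forall p q r : V, p != q -> q != r -> p != r ->
    (xat x p q + xat x q r <= 1 + xat x p r)%N.

(* partial functions P_V -> {0,1}: None = outside the domain *)
Definition pfun (V : finType) := {ffun PV V -> option bool}.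

Definition in_XVp (V : finType) (xt : pfun V) (x : {ffun PV V -> bool}) : Prop :=
  in_XV x /\ forall pq b, xt pq = Some b -> x pq = b.

Definition decided (V : finType) (xt : pfun V) (pq : PV V) : Prop :=
  forall x x', in_XVp xt x -> in_XVp xt x' -> x pq = x' pq.

Definition max_specific (V : finType) (xt : pfun V) : Prop :=
  (exists x, in_XVp xt x) /\ (forall pq, decided xt pq <-> xt pq <> None).

Definition phi (R : realType) (V : finType) (c : PV V -> R) (x : {ffun PV V -> bool}) : R :=
  (\sum_(pq : PV V) c pq * (x pq)%:R)%R.

Definition cut (V : finType) (U : {set V}) (pq : PV V) : bool :=
  ((val pq).1 \in U) && ((val pq).2 \notin U).

From HB Require Import structures.
From mathcomp Require Import all_boot all_order all_algebra.
From mathcomp Require Import reals boolp.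
Import Order.TTheory GRing.Theory Num.Theory.

Set Implicit Arguments.
Unset Strict Implicit.
Unset Printing Implicit Defensive.

(* Deleting from a feasible x every pair that leaves U keeps all triangle
   inequalities: a surviving path p -> q -> r cannot have p in U and r outside
   U, since one of its two steps would cross the cut.  It also keeps agreement
   with xh, which assigns 1 to no cut pair, and it cannot decrease phi_c since
   c <= 0 on the deleted pairs.  Applying this to a maximizer gives the claim;
   of maximal specificity only the nonemptiness of X_V[xh] is needed. *)

Lemma xatE (V : finType) (x : {ffun PV V -> bool}) (p q : V) (pq : p != q) :
  xat x p q = x (exist _ (p, q) pq).
Proof.
rewrite /xat; case: insubP => [u _ hu|]; last by rewrite /= pq.
by congr (nat_of_bool (x _)); apply: val_inj; rewrite hu.
Qed.

Lemma ex_maximizer {d : Order.disp_t} {O : orderType d} {T : finType}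
    {P : T -> Prop} (f : T -> O) :
  (exists x, P x) -> exists2 x, P x & forall y, P y -> (f y <= f x)%O.
Proof.
case=> x0 Px0; have Px0b : `[< P x0 >] by apply/asboolP.
case: (@arg_maxP _ _ _ x0 (fun y => `[< P y >]) f Px0b) => x /asboolP Px maxx.
by exists x => // y Py; apply/maxx/asboolP.
Qed.

Section CutOff.

Variables (V : finType) (U : {set V}).

Definition cut_off (x : {ffun PV V -> bool}) : {ffun PV V -> bool} :=
  [ffun pq => x pq && ~~ cut U pq].

Lemma cut_off_cut (x : {ffun PV V -> bool}) (pq : PV V) :
  cut U pq -> cut_off x pq = false.
Proof. by move=> cpq; rewrite ffunE cpq andbF. Qed.

Lemma in_XV_cut_off (x : {ffun PV V -> bool}) : in_XV x -> in_XV (cut_off x).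
Proof.
move=> Xx p q r pq qr pr; move: (Xx p q r pq qr pr).
rewrite !xatE !ffunE /cut /=.
by move: (x _) (x _) (x _) (p \in U) (q \in U) (r \in U); do 6!case.
Qed.

Lemma in_XVp_cut_off (xh : pfun V) (x : {ffun PV V -> bool}) :
  (forall pq, cut U pq -> xh pq <> Some true) ->
  in_XVp xh x -> in_XVp xh (cut_off x).
Proof.
move=> xh_cut [Xx xhx]; split=> [|pq b xhpq]; first exact: in_XV_cut_off.
rewrite ffunE (xhx _ _ xhpq); case: b xhpq => xhpq //.
by case: (boolP (cut U pq)) => [/xh_cut /(_ xhpq)|].
Qed.

Lemma phi_le_cut_off (R : realType) (c : PV V -> R) (x : {ffun PV V -> bool}) :
  (forall pq, cut U pq -> x pq -> (c pq <= 0)%R) ->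
  (phi c x <= phi c (cut_off x))%R.
Proof.
move=> c_cut; apply: ler_sum => pq _; rewrite ffunE.
case: (boolP (cut U pq)) => [cpq|]; last by rewrite andbT.
case: (boolP (x pq)) => [xpq|] //=.
by rewrite mulr1 mulr0; apply: c_cut.
Qed.

End CutOff.

Theorem corollary6p3 (R : realType) (V : finType) (c : PV V -> R) (U : {set V})
  (xh : pfun V) :
  (0 < #|V|)%N ->
  max_specific xh ->
  (forall pq, cut U pq -> xh pq <> Some true) ->
  (forall pq, cut U pq -> xh pq <> Some false -> (c pq <= 0)%R) ->
  exists xs : {ffun PV V -> bool},
    [/\ in_XVp xh xs,
        (forall x, in_XVp xh x -> (phi c x <= phi c xs)%R) &
        (forall pq, cut U pq -> xh pq <> Some false -> xs pq = false)].
Proof.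
move=> _ [feasible _] xh_cut c_cut.
have [x Xx maxx] := ex_maximizer (phi c) feasible.
have le_phi : (phi c x <= phi c (cut_off U x))%R.
  apply: phi_le_cut_off => pq cpq xpq; apply: c_cut => // /(proj2 Xx) xpqF.
  by rewrite xpqF in xpq.
exists (cut_off U x); split.
- exact: in_XVp_cut_off.
- by move=> y Xy; apply: le_trans le_phi; apply: maxx.
- by move=> pq cpq _; apply: cut_off_cut.
Qed.
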